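(* Let $R\subseteq S$, $\sigma$ be as in the context. Let $a_1,\ldots,a_\ell\in S$ be such that $a_i-a_j^\beta\in S^*$ for all $\beta\in S^*$ and all $1\le i<j\le\ell$. For $i=1,\ldots,\ell$, let $\mathbf{u}_i=(u_{i,1},\ldots,u_{i,n_i})\in S^{n_i}$ and $t_i={\rm rk}(\mathbf{u}_i)$, and set $t=t_1+\cdots+t_\ell$. Then there exists a monic skew polynomial $F\in S[x;\sigma]$ with $\deg(F)=t$ and $F_{a_i}(u_{i,j})=0$ for all $1\le j\le n_i$ and $1\le i\le\ell$.
   Context: $R$ is a finite commutative chain ring with maximal ideal $\mathfrak{m}$, $q=|R/\mathfrak{m}|$; $S=R[x]/(h)$ with $h$ monic of degree $m$ irreducible modulo $\mathfrak{m}$, local with maximal ideal $\mathfrak{M}=\mathfrak{m}S$ and unit group $S^*=S\setminus\mathfrak{M}$. $\sigma$ is a ring automorphism of $S$ generating the Galois group of $R\subseteq S$, with fixed ring $R$, reducing modulo $\mathfrak{M}$ to $y\mapsto y^q$. $S[x;\sigma]$ is the skew polynomial ring with $xa=\sigma(a)x$. For $a,\beta\in S$: $N_i(a)=\sigma^{i-1}(a)\cdots\sigma(a)a$, $\mathcal{D}_a^i(\beta)=\sigma^i(\beta)N_i(a)$, and for $F=\sum_iF_ix^i$, $F_a(\beta)=\sum_iF_i\mathcal{D}_a^i(\beta)$. For $\beta\in S^*$, $a^\beta=\sigma(\beta)a\beta^{-1}$. Rank: for $\mathbf{u}\in S^s$, fix an $R$-basis $\alpha_1,\ldots,\alpha_m$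 of $S$ and write $\mathbf{u}=\sum_{i=1}^m\alpha_i(c_{i,1},\ldots,c_{i,s})$ with $c_{i,j}\in R$; ${\rm rk}(\mathbf{u})$ is the number of nonzero diagonal entries in the Smith normal form of the matrix $(c_{i,j})\in R^{m\times s}$ (independent of the basis). *)

From HB Require Import structures.
From mathcomp Require Import all_boot all_order all_algebra.
Set Implicit Arguments.
Unset Strict Implicit.
Unset Printing Implicit Defensive.
Import GRing.Theory.
Local Open Scope ring_scope.

(* principal ideals (hence all ideals) of R are totally ordered by inclusion *)
Definition chain_ring (R : finComUnitRingType) : Prop :=
  forall x y : R, (exists r, x = r * y) \/ (exists r, y = r * x).

(* the maximal ideal of a local ring = its set of non-units *)
Definition in_max_ideal (R : comUnitRingType) (x : R) : bool :=
  x \isn't a GRing.unit.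

Definition residue_card (R : finComUnitRingType) : nat :=
  (#|R| %/ #|[set x : R | in_max_ideal x]|)%N.

Definition const_mod_m (R : comUnitRingType) (f : {poly R}) : Prop :=
  forall k, (0 < k)%N -> in_max_ideal f`_k.
Definition irreducible_mod_m (R : comUnitRingType) (h : {poly R}) : Prop :=
  ~ const_mod_m h /\
  forall f g : {poly R}, (forall k, in_max_ideal (h - f * g)`_k) ->
    const_mod_m f \/ const_mod_m g.

Section Skew.
Variables (S : comUnitRingType) (sigma : S -> S).

Definition normN (i : nat) (a : S) : S := \prod_(k < i) iter k sigma a.
Definition Dop (a : S) (i : nat) (b : S) : S := iter i sigma b * normN i a.
(* F_a(beta) = sum_i F_i D_a^i(beta), F = sum_i F_i x^i given by its coefficients *)
Definition skew_eval (F : {poly S}) (a b : S) : S :=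
  \sum_(i < size F) F`_i * Dop a i b.
Definition conj_act (a b : S) : S := sigma b * a * b^-1.
End Skew.

Section Rank.
Variable R : comUnitRingType.

Definition mx_diag_at m s (D : 'M[R]_(m, s)) (k : nat) : R :=
  odflt 0 (obind (fun i : 'I_m => omap (fun j : 'I_s => D i j) (insub k)) (insub k)).

Definition dvdr_ (a b : R) : Prop := exists c, b = c * a.

Definition smith_form m s (D : 'M[R]_(m, s)) : Prop :=
  (forall (i : 'I_m) (j : 'I_s), (i : nat) != j -> D i j = 0) /\
  (forall k, (k.+1 < minn m s)%N -> dvdr_ (mx_diag_at D k) (mx_diag_at D k.+1)).

Definition nonzero_diag m s (D : 'M[R]_(m, s)) : nat :=
  #|[set k : 'I_(minn m s) | mx_diag_at D k != 0]|.

(* rk(u) = t, computed w.r.t. the R-basis 1, theta, ..., theta^(m-1) of S: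
   C is the coordinate matrix (C i j = coefficient of theta^i in u_j) and
   D = P C Q is a Smith normal form of C with t nonzero diagonal entries. *)
Definition is_rank (S : nzRingType) (iota : R -> S) (theta : S) (m s : nat)
    (u : 'I_s -> S) (t : nat) : Prop :=
  exists C : 'M[R]_(m, s),
    (forall j, u j = \sum_(i < m) iota (C i j) * theta ^+ i) /\
    exists (P : 'M[R]_m) (Q : 'M[R]_s) (D : 'M[R]_(m, s)),
      [/\ P \in unitmx, Q \in unitmx, D = P *m C *m Q, smith_form D
        & nonzero_diag D = t].
End Rank.

(* Every w in S is r y with r in R and y a unit: among the coordinates of w
   in the basis 1, theta, ..., theta^(m-1) one divides all the others (R is
   a chain ring), and an element having a coordinate equal to 1 is a unit
   because h is irreducible modulo m.  Hence, for sigma fixing R,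
   sigma(w) a = c w with c = sigma(y) a y^-1.
   As ((x - c) G)_a(b) = sigma(G_a(b)) a - c G_a(b), choosing c for G_a(w)
   turns a monic G of degree k vanishing on k pairs (a_i, w_i) into a monic
   (x - c) G of degree k + 1 that also vanishes on (a, w).
   Finally, the Smith normal form of the coordinate matrix of u_i yields t_i
   elements whose R-span contains every u_ij, and F_a is R-linear, so F only
   has to vanish on t_1 + ... + t_l pairs. *)

From HB Require Import structures.
From mathcomp Require Import all_boot all_order all_algebra.
Set Implicit Arguments.
Unset Strict Implicit.
Unset Printing Implicit Defensive.
Import GRing.Theory.
Local Open Scope ring_scope.

Section SkewEvaluation.
Variables (S : comUnitRingType) (sigma : {rmorphism S -> S}).

Lemma iter_rmorphB k : {morph iter k sigma : x y / x - y}.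
Proof. by elim: k => // k IH x y; rewrite iterS IH rmorphB. Qed.

Lemma iter_rmorphM k : {morph iter k sigma : x y / x * y}.
Proof. by elim: k => // k IH x y; rewrite iterS IH rmorphM. Qed.

Lemma normNS i (a : S) : normN sigma i.+1 a = sigma (normN sigma i a) * a.
Proof.
rewrite /normN big_ord_recl mulrC rmorph_prod.
by congr (_ * _); apply: eq_bigr => k _; rewrite -iterSr.
Qed.

Lemma DopS (a : S) i (b : S) : Dop sigma a i.+1 b = sigma (Dop sigma a i b) * a.
Proof. by rewrite /Dop normNS rmorphM mulrA. Qed.

Lemma DopB (a : S) i : {morph Dop sigma a i : x y / x - y}.
Proof. by move=> x y; rewrite /Dop iter_rmorphB mulrBl. Qed.

Lemma DopM (a : S) i (c b : S) :
  Dop sigma a i (c * b) = iter i sigma c * Dop sigma a i b.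
Proof. by rewrite /Dop iter_rmorphM mulrA. Qed.

Lemma skew_eval_is_zmod_morphism (F : {poly S}) (a : S) :
  zmod_morphism (skew_eval sigma F a).
Proof.
move=> x y; rewrite /skew_eval -sumrB.
by apply: eq_bigr => i _; rewrite DopB mulrBr.
Qed.

HB.instance Definition _ (F : {poly S}) (a : S) := GRing.isZmodMorphism.Build S S
  (skew_eval sigma F a) (skew_eval_is_zmod_morphism F a).

Lemma skew_evalZ (F : {poly S}) (a c b : S) : (forall k, iter k sigma c = c) ->
  skew_eval sigma F a (c * b) = c * skew_eval sigma F a b.
Proof.
move=> c_fix; rewrite /skew_eval mulr_sumr.
by apply: eq_bigr => i _; rewrite DopM c_fix mulrCA.
Qed.

Lemma skew_evalE n (F : {poly S}) (a b : S) : (size F <= n)%N ->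
  skew_eval sigma F a b = \sum_(i < n) F`_i * Dop sigma a i b.
Proof.
move=> le_Fn; rewrite /skew_eval.
rewrite (big_ord_widen n (fun i => F`_i * Dop sigma a i b) le_Fn) big_mkcond /=.
 apply: eq_bigr => i _.
by case: ltnP => // /(nth_default 0) ->; rewrite mul0r.
Qed.

(* (x - c) G in S[x; sigma], as x G_i = sigma(G_i) x *)
Definition skewXsubC_mul (c : S) (G : {poly S}) : {poly S} :=
  map_poly sigma G * 'X - c *: G.

Lemma skew_eval_XsubC_mul (c : S) (G : {poly S}) (a b : S) :
  skew_eval sigma (skewXsubC_mul c G) a b =
  sigma (skew_eval sigma G a b) * a - c * skew_eval sigma G a b.
Proof.
have size_mul : (size (skewXsubC_mul c G) <= (size G).+1)%N.
  rewrite (leq_trans (size_polyD _ _)) // geq_max size_polyN.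
  rewrite (leq_trans (size_scale_leq _ _)) // andbT.
  by rewrite (leq_trans (size_mul_leq _ _)) // size_polyX addn2 ltnS size_poly.
rewrite (skew_evalE a b size_mul) (skew_evalE a b (leqnSn (size G))).
under eq_bigr do rewrite coefB coefMX coefZ coef_map mulrBl.
rewrite sumrB big_ord_recl /= mul0r add0r mulr_sumr; congr (_ - _); last first.
  by apply: eq_bigr => i _; rewrite -mulrA.
rewrite big_ord_recr /= nth_default // mul0r addr0 rmorph_sum mulr_suml.
by apply: eq_bigr => i _; rewrite DopS mulrA -rmorphM.
Qed.

Lemma skewXsubC_mul_monic (c : S) (G : {poly S}) : G \is monic ->
  skewXsubC_mul c G \is monic /\ size (skewXsubC_mul c G) = (size G).+1.
Proof.
move=> G_monic; have sigmaG_monic := monic_map sigma G_monic.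
have sG : size (map_poly sigma G * 'X) = (size G).+1.
  rewrite size_mulX ?monic_neq0 // size_map_poly_id0 //.
  by rewrite (monicP G_monic) rmorph1 oner_neq0.
have lt_cG : (size (- (c *: G)) < size (map_poly sigma G * 'X)%R)%N.
  by rewrite size_polyN sG ltnS size_scale_leq.
split; last by rewrite size_polyDl.
by rewrite monicE lead_coefDl // lead_coefMX (monicP sigmaG_monic).
Qed.

Hypothesis dvdr_sigma : forall a w : S, dvdr_ w (sigma w * a).

Lemma skew_annihilator (L : seq (S * S)) :
  exists F, [/\ F \is monic, size F = (size L).+1
    & {in L, forall p, skew_eval sigma F p.1 p.2 = 0}].
Proof.
elim: L => [|[a w] L [G [G_monic sG G0]]].
  by exists 1; split; rewrite ?monic1 ?size_poly1.
have [c Hc] := dvdr_sigma a (skew_eval sigma G a w).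
have [F_monic sF] := skewXsubC_mul_monic c G_monic.
exists (skewXsubC_mul c G); split; rewrite ?sF ?sG //.
move=> p; rewrite inE skew_eval_XsubC_mul => /predU1P[-> /= | /G0 ->].
  by rewrite Hc subrr.
by rewrite rmorph0 mul0r mulr0 subrr.
Qed.

End SkewEvaluation.

Section ResidueField.
Variable R : comUnitRingType.
Hypothesis nonunitD : forall x y : R,
  x \isn't a GRing.unit -> y \isn't a GRing.unit -> x + y \isn't a GRing.unit.

Definition nonunits : {pred R} := fun x => x \isn't a GRing.unit.

Lemma nonunitsE x : (x \in nonunits) = (x \isn't a GRing.unit).
Proof. by []. Qed.

Lemma nonunits_idealr_closed : idealr_closed nonunits.
Proof.
split=> [||a u v]; rewrite !nonunitsE ?unitr0 ?unitr1 // => nu_u nu_v.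
by apply: nonunitD => //; rewrite unitrM negb_and nu_u orbT.
Qed.

HB.instance Definition _ := isIdealr.Build R nonunits nonunits_idealr_closed.

Definition residue_field := {ideal_quot (nonunits : idealr R)}.
HB.instance Definition _ := GRing.ComNzRing.on residue_field.
HB.instance Definition _ := Quotient.on residue_field.

Local Notation res := (\pi_residue_field)%qT.

Lemma residue_eq0 (x : R) : (res x == 0) = (x \isn't a GRing.unit).
Proof. by rewrite -(rmorph0 res) -Quotient.idealrBE subr0. Qed.

Definition residue_inv (x : residue_field) : residue_field := res (repr x)^-1.

Lemma residue_mulVf (x : residue_field) : x != 0 -> residue_inv x * x = 1.
Proof.
rewrite /residue_inv -{1 3}(reprK x) residue_eq0 negbK => x_unit.
by rewrite -rmorphM mulVr // rmorph1.
Qed.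

Lemma residue_inv0 : residue_inv 0 = 0.
Proof.
by apply/eqP; rewrite /residue_inv residue_eq0 unitrV -residue_eq0 reprK.
Qed.

HB.instance Definition _ :=
  GRing.ComNzRing_isField.Build residue_field residue_mulVf residue_inv0.

End ResidueField.

Lemma chain_ring_nonunitD (R : finComUnitRingType) : chain_ring R ->
  forall x y : R, x \isn't a GRing.unit -> y \isn't a GRing.unit ->
  x + y \isn't a GRing.unit.
Proof.
move=> chainR x y nu_x nu_y; case: (chainR x y) => [[r ->]|[r ->]].
  by rewrite -{2}[y]mul1r -mulrDl unitrM negb_and nu_y orbT.
by rewrite -{1}[x]mul1r -mulrDl unitrM negb_and nu_x orbT.
Qed.

Section ChainRing.
Variables (R : finComUnitRingType) (chainR : chain_ring R).

Lemma chain_ring_seq_divisor (x0 : R) (s : seq R) :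
  exists2 d, d \in x0 :: s & {in x0 :: s, forall y, dvdr_ d y}.
Proof.
elim: s => [|z s [d d_in d_dvd]].
  exists x0 => [|y /[!inE] /eqP ->]; first exact: mem_head.
  by exists 1; rewrite mul1r.
have mem_cons y : (y \in x0 :: z :: s) = (y == z) || (y \in x0 :: s).
  by rewrite !inE orbCA.
case: (chainR z d) => [[r zE]|[r dE]].
  exists d => [|y]; first by rewrite mem_cons d_in orbT.
  by rewrite mem_cons => /predU1P[->|/d_dvd]; first by exists r.
exists z => [|y]; first by rewrite mem_cons eqxx.
rewrite mem_cons => /predU1P[->|/d_dvd[c ->]]; first by exists 1; rewrite mul1r.
by exists (c * r); rewrite dE mulrA.
Qed.

Lemma chain_ring_factor (I : finType) (i0 : I) (f : I -> R) :
  exists d (g : I -> R), (exists j, g j = 1) /\ forall i, f i = d * g i.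
Proof.
have [d d_in d_dvd] := chain_ring_seq_divisor (f i0) (map f (enum I)).
have f_in i : f i \in f i0 :: map f (enum I) by rewrite inE map_f ?mem_enum ?orbT.
have [j dE] : exists j, d = f j.
  by case/predU1P: d_in => [->|/mapP[j _ ->]]; eexists.
rewrite {d d_in}dE in d_dvd.
have g_ex i : exists c, f i = c * f j /\ (i = j -> c = 1).
  have [-> | ne_ij] := eqVneq i j; first by exists 1; rewrite mul1r.
  have [c fiE] := d_dvd _ (f_in i).
  by exists c; split=> // eq_ij; case/eqP: ne_ij.
have [g gP] := fin_all_exists g_ex.
exists (f j), g; split; first by exists j; apply: (gP j).2.
by move=> i; rewrite mulrC; apply: (gP i).1.
Qed.

End ChainRing.

Lemma fin_nonunit_zero_divisor (T : finComUnitRingType) (y : T) :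
  y \isn't a GRing.unit -> exists2 z, z != 0 & y * z = 0.
Proof.
move=> nu_y; have /injectivePn[z1 [z2 ne_z yz]] : ~~ injectiveb (fun z => y * z).
  apply: contra nu_y => /injectiveP/injF_bij[g _ gK].
  by apply/unitrPr; exists (g 1); apply: gK.
by exists (z1 - z2); rewrite ?subr_eq0 // mulrBr yz subrr.
Qed.

Lemma irreducible_ndvdp_mul (F : fieldType) (p f g : {poly F}) :
  irreducible_poly p -> f != 0 -> g != 0 ->
  (size f < size p)%N -> (size g < size p)%N -> ~~ (p %| f * g).
Proof.
move=> p_irr nz_f nz_g lt_fp lt_gp.
have ndvd (q : {poly F}) : q != 0 -> (size q < size p)%N -> ~~ (p %| q).
  by move=> nz_q lt_qp; apply: contraL lt_qp => /(dvdp_leq nz_q); rewrite leqNgt.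
by rewrite Gauss_dvdpr ?irreducible_poly_coprime ?ndvd.
Qed.

Section GaloisExtension.
Variables (R : finComUnitRingType) (chainR : chain_ring R).
Variables (m : nat) (h : {poly R}).
Hypotheses (h_monic : h \is monic) (size_h : size h = m.+1)
  (h_irr : irreducible_mod_m h).
Variables (S : finComUnitRingType) (iota : {rmorphism R -> S}) (theta : S).
Hypothesis basis : forall s : S, exists! c : 'rV[R]_m,
  s = \sum_(i < m) iota (c 0 i) * theta ^+ i.
Hypothesis h_theta : (map_poly iota h).[theta] = 0.

Local Notation ev p := (map_poly iota p).[theta].
Local Notation R_local := (chain_ring_nonunitD chainR).
Local Notation K := (residue_field R_local).
Local Notation res := (\pi_K)%qT.

Lemma m_gt0 : (0 < m)%N.
Proof.
have [c [oneE _]] := basis 1; move: oneE; case: m c => // c.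
by rewrite big_ord0 => /eqP; rewrite oner_eq0.
Qed.

Lemma coord_inj (f g : 'I_m -> R) :
  \sum_i iota (f i) * theta ^+ i = \sum_i iota (g i) * theta ^+ i -> f =1 g.
Proof.
move=> eq_fg i; set s := \sum_i _ in eq_fg.
have [c [_ c_uniq]] := basis s.
have /c_uniq fE : s = \sum_i iota ((\row_j f j) 0 i) * theta ^+ i.
  by apply: eq_bigr => j _; rewrite mxE.
have /c_uniq gE : s = \sum_i iota ((\row_j g j) 0 i) * theta ^+ i.
  by rewrite eq_fg; apply: eq_bigr => j _; rewrite mxE.
by have := congr1 (fun c : 'rV_m => c 0 i) (etrans (esym fE) gE); rewrite !mxE.
Qed.

Definition coord_poly (g : 'I_m -> R) : {poly R} := \sum_(i < m) g i *: 'X^i.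

Lemma coef_coord_poly g (i : 'I_m) : (coord_poly g)`_i = g i.
Proof.
rewrite coef_sum (bigD1 i) //= coefZ coefXn eqxx mulr1 big1 ?addr0 // => j.
rewrite -val_eqE => ne_ji.
by rewrite coefZ coefXn eq_sym (negPf ne_ji) mulr0.
Qed.

Lemma size_coord_poly g : (size (coord_poly g) <= m)%N.
Proof.
apply: (big_ind (fun p : {poly R} => size p <= m)%N); rewrite ?size_poly0 //.
  by move=> p q sp sq; rewrite (leq_trans (size_polyD _ _)) // geq_max sp.
by move=> i _; rewrite (leq_trans (size_scale_leq _ _)) // size_polyXn.
Qed.

Lemma evE (p : {poly R}) : (size p <= m)%N ->
  ev p = \sum_(i < m) iota p`_i * theta ^+ i.
Proof.
move=> le_pm; rewrite (horner_coef_wide theta (leq_trans (size_poly _ _) le_pm)).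
by apply: eq_bigr => i _; rewrite coef_map.
Qed.

Lemma ev_coord_poly g : ev (coord_poly g) = \sum_i iota (g i) * theta ^+ i.
Proof.
by rewrite evE ?size_coord_poly //; apply: eq_bigr => i _; rewrite coef_coord_poly.
Qed.

Lemma ev_rmodp p : ev (Pdiv.CommonRing.rmodp p h) = ev p.
Proof.
rewrite [in RHS](Pdiv.RingMonic.rdivp_eq h_monic p) rmorphD rmorphM /=.
by rewrite hornerD hornerM h_theta mulr0 add0r.
Qed.

Lemma residue_coords_eq0 (d : R) (p : {poly R}) : d != 0 -> (size p <= m)%N ->
  iota d * ev p = 0 -> map_poly res p = 0.
Proof.
move=> nz_d le_pm dp0; apply/polyP => k; rewrite coef_map coef0; apply/eqP.
rewrite (residue_eq0 R_local); have [lt_km|le_mk] := ltnP k m; last first.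
  by rewrite nth_default ?unitr0 // (leq_trans le_pm).
have /(_ (Ordinal lt_km)) /= dpk0 : (fun i : 'I_m => d * p`_i) =1 (fun=> 0).
  apply: coord_inj; rewrite [RHS]big1 => [|i _]; last by rewrite rmorph0 mul0r.
  rewrite -[RHS]dp0 evE // mulr_sumr; apply: eq_bigr => i _.
  by rewrite rmorphM mulrA.
by apply: contra nz_d => pk_unit; rewrite -(mulrK pk_unit d) dpk0 mul0r.
Qed.

Lemma size_residue_h : size (map_poly res h) = m.+1.
Proof. by rewrite size_map_poly_id0 // (monicP h_monic) rmorph1 oner_neq0. Qed.

Lemma residue_liftK (p : {poly K}) : map_poly res (map_poly repr p) = p.
Proof. by rewrite -map_poly_comp map_poly_id // => x _ /=; rewrite reprK. Qed.

Lemma const_mod_m_size (p : {poly R}) : const_mod_m p ->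
  (size (map_poly res p) <= 1)%N.
Proof.
move=> p_const; have -> : map_poly res p = (res p`_0)%:P.
  apply/polyP => -[|k]; rewrite coef_map coefC //=.
  by apply/eqP; rewrite (residue_eq0 R_local); apply: p_const.
by rewrite size_polyC leq_b1.
Qed.

Lemma residue_h_irreducible : irreducible_poly (map_poly res h).
Proof.
split=> [|q sq q_dvd]; first by rewrite size_residue_h ltnS m_gt0.
set hb := map_poly res h in q_dvd *.
have nz_hb : hb != 0 by rewrite -size_poly_eq0 size_residue_h.
have hbE := divpK q_dvd.
have nz_q : q != 0 by apply: contraNneq nz_hb => q0; rewrite -hbE q0 mulr0.
have h_mod k : in_max_ideal (h - map_poly repr (hb %/ q) * map_poly repr q)`_k.
  rewrite /in_max_ideal -(residue_eq0 R_local) -coef_map rmorphB rmorphM /=.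
  by rewrite !residue_liftK hbE subrr coef0.
case: (h_irr.2 _ _ h_mod) => /const_mod_m_size; rewrite residue_liftK => small.
  have nz_quo : hb %/ q != 0.
    by apply: contraNneq nz_hb => q0; rewrite -hbE q0 mul0r.
  have /eqP size_quo : size (hb %/ q) == 1%N.
    by rewrite eqn_leq small lt0n size_poly_eq0.
  by rewrite -dvdp_size_eqp // -hbE size_mul // size_quo add1n.
move: small sq; rewrite leq_eqVlt ltnS leqn0 size_poly_eq0 (negPf nz_q) orbF.
by move=> ->.
Qed.

Lemma coords_factor (w : S) : exists d (g : 'I_m -> R),
  (exists j, g j = 1) /\ w = iota d * \sum_i iota (g i) * theta ^+ i.
Proof.
have [c [wE _]] := basis w.
have [d [g [g1 cE]]] := chain_ring_factor chainR (Ordinal m_gt0) (fun i => c 0 i).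
exists d, g; split => //; rewrite wE mulr_sumr; apply: eq_bigr => i _.
by rewrite cE rmorphM mulrA.
Qed.

Lemma residue_coord_poly_neq0 (g : 'I_m -> R) j : g j = 1 ->
  map_poly res (coord_poly g) != 0.
Proof.
move=> gj1; apply/eqP => /(congr1 (fun p : {poly K} => p`_j)).
rewrite coef_map coef_coord_poly gj1 coef0 => /eqP.
by rewrite (residue_eq0 R_local) unitr1.
Qed.

Lemma size_residue_coord_poly (g : 'I_m -> R) :
  (size (map_poly res (coord_poly g)) < size (map_poly res h))%N.
Proof.
rewrite size_residue_h ltnS /map_poly.
by rewrite (leq_trans (size_poly _ _)) ?size_coord_poly.
Qed.

Lemma coord_unit (g : 'I_m -> R) j : g j = 1 ->
  \sum_i iota (g i) * theta ^+ i \is a GRing.unit.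
Proof.
move=> gj1; rewrite -ev_coord_poly; apply/negPn/negP.
move=> /fin_nonunit_zero_divisor[z nz_z yz].
have [d [f [[k fk1] zE]]] := coords_factor z.
have nz_d : d != 0 by apply: contraNneq nz_z => d0; rewrite zE d0 rmorph0 mul0r.
(* z = d y' with d != 0 makes g f vanish modulo m and h *)
have := Pdiv.RingMonic.rdivp_eq h_monic (coord_poly g * coord_poly f).
set P := Pdiv.CommonRing.rmodp _ h => gfE.
have P0 : map_poly res P = 0.
  apply: (residue_coords_eq0 nz_d).
    by rewrite -ltnS -size_h Pdiv.CommonRing.ltn_rmodp monic_neq0.
  by rewrite ev_rmodp rmorphM hornerM mulrCA (ev_coord_poly f) -zE yz.
have /negP[] := irreducible_ndvdp_mul residue_h_irreducible
  (residue_coord_poly_neq0 gj1) (residue_coord_poly_neq0 fk1)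
  (size_residue_coord_poly g) (size_residue_coord_poly f).
by rewrite -!rmorphM /= gfE rmorphD rmorphM /= P0 addr0 dvdp_mulIr.
Qed.

Lemma scalar_times_unit (w : S) : exists d y,
  y \is a GRing.unit /\ w = iota d * y.
Proof.
have [d [g [[j gj1] wE]]] := coords_factor w.
by exists d, (\sum_i iota (g i) * theta ^+ i); split; first exact: coord_unit gj1.
Qed.

Lemma dvdr_sigma_mulr (sigma : {rmorphism S -> S}) :
  (forall r, sigma (iota r) = iota r) -> forall a w : S, dvdr_ w (sigma w * a).
Proof.
move=> sigma_fix a w; have [d [y [y_unit ->]]] := scalar_times_unit w.
exists (sigma y * a / y).
by rewrite rmorphM sigma_fix [iota d * y]mulrC mulrA divrK // [RHS]mulrC mulrA.
Qed.

End GaloisExtension.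

Section SmithRank.
Variables (R : comUnitRingType) (S : comNzRingType) (iota : {rmorphism R -> S}).

Lemma mx_diag_atE m s (D : 'M[R]_(m, s)) (i : 'I_m) (j : 'I_s) :
  (i : nat) = j -> mx_diag_at D i = D i j.
Proof.
by move=> ij; rewrite /mx_diag_at valK /= ij valK /=; congr (D _ _); apply: val_inj.
Qed.

Lemma smith_form_col_eq0 m s (D : 'M[R]_(m, s)) (k : 'I_s) : smith_form D ->
  (forall k' : 'I_(minn m s), (k' : nat) = k -> mx_diag_at D k' = 0) ->
  forall l, D l k = 0.
Proof.
case=> offdiag _ diag0 l; have [lk|] := eqVneq (l : nat) k; last exact: offdiag.
have lt_k : (k < minn m s)%N by rewrite leq_min -{1}lk !ltn_ord.
by rewrite -(mx_diag_atE D lk) lk; apply: (diag0 (Ordinal lt_k)).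
Qed.

Lemma is_rank_span theta m s (u : 'I_s -> S) t : is_rank iota theta m u t ->
  exists gens : seq S, size gens = t /\
  forall phi : {additive S -> S}, (forall r x, phi (iota r * x) = iota r * phi x) ->
    {in gens, forall v, phi v = 0} -> forall j, phi (u j) = 0.
Proof.
case=> C [uE [P [Q [D [P_unit Q_unit DE smithD rkD]]]]].
pose v k := \sum_(i < m) iota ((invmx P *m D) i k) * theta ^+ i.
pose nz := [set k : 'I_(minn m s) | mx_diag_at D k != 0].
exists [seq v (widen_ord (geq_minr m s) k) | k <- enum nz].
split=> [|phi phiZ phi_gens]; first by rewrite size_map -cardE -rkD.
have phi_v k : phi (v k) = 0.
  have [/existsP[k' /andP[/eqP k'E nz_k']] | ] :=
    boolP [exists k' : 'I_(minn m s), ((k' : nat) == k) && (k' \in nz)].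
    apply: phi_gens; apply/mapP; exists k'; first by rewrite mem_enum nz_k'.
    by congr v; apply: val_inj; rewrite /= k'E.
  rewrite negb_exists => /forallP diag0.
  have Dk0 := smith_form_col_eq0 smithD.
  rewrite /v big1 ?raddf0 // => i _; rewrite mxE big1 ?rmorph0 ?mul0r // => l _.
  rewrite Dk0 ?mulr0 // => k' k'E; apply/eqP; move: (diag0 k').
  by rewrite inE k'E eqxx /= negbK.
have CE : C = invmx P *m D *m invmx Q.
  by rewrite DE !mulmxA mulmxK // mulVmx // mul1mx.
move=> j; have -> : u j = \sum_k iota (invmx Q k j) * v k.
  rewrite uE CE; under eq_bigr do rewrite mxE rmorph_sum mulr_suml.
  rewrite exchange_big /=; apply: eq_bigr => k _; rewrite mulr_sumr.
  by apply: eq_bigr => i _; rewrite rmorphM -mulrA mulrCA.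
by rewrite raddf_sum big1 // => k _; rewrite phiZ phi_v mulr0.
Qed.

End SmithRank.

Theorem corollary3
  (R : finComUnitRingType) (hR : chain_ring R)
  (m : nat) (h : {poly R})
  (hh_monic : h \is monic) (hh_size : size h = m.+1)
  (hh_irr : irreducible_mod_m h)
  (S : finComUnitRingType) (iota : {rmorphism R -> S}) (theta : S)
  (hS_basis : forall s : S, exists! c : 'rV[R]_m,
      s = \sum_(i < m) iota (c 0 i) * theta ^+ i)
  (hS_root : (map_poly iota h).[theta] = 0)
  (sigma : {rmorphism S -> S}) (hsigma_bij : bijective sigma)
  (hsigma_fix : forall s : S, sigma s = s <-> exists r : R, s = iota r)
  (hsigma_gen : forall tau : {rmorphism S -> S}, bijective tau ->
      (forall r : R, tau (iota r) = iota r) ->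
      exists k : nat, forall s : S, tau s = iter k sigma s)
  (hsigma_frob : forall y : S,
      in_max_ideal (sigma y - y ^+ residue_card R))
  (l : nat) (a : 'I_l -> S)
  (ha : forall (i j : 'I_l) (beta : S), (i < j)%N ->
      beta \is a GRing.unit -> a i - conj_act sigma (a j) beta \is a GRing.unit)
  (n : 'I_l -> nat) (u : forall i : 'I_l, 'I_(n i) -> S) (t : 'I_l -> nat)
  (ht : forall i : 'I_l, is_rank iota theta m (u i) (t i)) :
  exists F : {poly S},
    [/\ F \is monic, size F = (\sum_(i < l) t i).+1
      & forall (i : 'I_l) (j : 'I_(n i)), skew_eval sigma F (a i) (u i j) = 0].
Proof.
have sigma_fix r : sigma (iota r) = iota r by apply/hsigma_fix; exists r.
have [gens gensP] := fin_all_exists (fun i => is_rank_span (ht i)).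
pose L := [seq (a i, v) | i <- index_enum 'I_l, v <- gens i].
have dvdr_sigma :=
  dvdr_sigma_mulr hR hh_monic hh_size hh_irr hS_basis hS_root sigma_fix.
have [F [F_monic size_F F0]] := skew_annihilator dvdr_sigma L.
exists F; split=> // [|i j].
  rewrite size_F size_allpairs_dep sumnE big_map.
  by congr _.+1; apply: eq_bigr => i _; rewrite (gensP i).1.
apply: (gensP i).2 => [r x | v v_in].
  by apply: skew_evalZ => k; elim: k => //= k ->; apply: sigma_fix.
by apply: (F0 (a i, v)); rewrite allpairs_f_dep ?mem_index_enum.
Qed.
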